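(* For odd $N\ge3$, let $K=\tilde F(N)$, $L=N(N+1)$, $n=N$, let $C^0,\dots,C^{K-1}$ be the sequences $c^m_i=\omega_{N+1}^{\pi_m(\langle i\rangle_N)\cdot i}$ ($0\le i<L$) built from a $K\times N$ circular Florentine rectangle with rows $\pi_0,\dots,\pi_{K-1}$, let $\theta_{\max}$ be their maximum periodic correlation magnitude (over all autocorrelations at shifts $0<\tau<L$ and all cross-correlations between distinct sequences at shifts $0\le\tau<L$), and let $\theta_{opti}=L\sqrt{\frac{(K-1)L+n}{(L-n)(KL-1)}}$. Then $\theta_{\max}/\theta_{opti}\to1$ as $N\to\infty$ through each of the following sets of integers: (1) $N=p$ an odd prime; (2) $N=p(p+k)$ where $k$ is a fixed positive integer and $p$, $p+k$ are odd primes; (3) $N=\prod_{i=1}^h(m+k_i)$, where $\mathcal{H}=\{k_1,\dots,k_h\}$ is a fixed admissible set of distinct nonnegative integers and $m+k_1,\dots,m+k_h$ are odd primes.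
   Context: $\omega_n=e^{2\pi\sqrt{-1}/n}$. An $M\times N$ circular Florentine rectangle (CFR) over $\mathbb{Z}_N$ is an $M\times N$ array whose rows $\pi_i:\mathbb{Z}_N\to\mathbb{Z}_N$ are permutations such that for every $m\in\mathbb{Z}_N\setminus\{0\}$ and all $i,j,x,y$: $(\pi_i(x),\pi_i(x+m))=(\pi_j(y),\pi_j(y+m))$ (indices mod $N$) iff $i=j$ and $x=y$. $\tilde F(N)$ is the largest $M$ for which an $M\times N$ CFR exists. Periodic correlation: $\theta_{C,D}(\tau)=\sum_{t=0}^{L-1}c_td^*_{\langle t+\tau\rangle_L}$. A finite set $\mathcal{H}$ of integers is admissible if for every prime $q$ the elements of $\mathcal{H}$ do not cover all residue classes modulo $q$. *)

From HB Require Import structures.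
From mathcomp Require Import all_boot all_order all_algebra all_fingroup.
From mathcomp Require Import reals trigo.
From mathcomp Require Import complex.

Set Implicit Arguments.
Unset Strict Implicit.
Unset Printing Implicit Defensive.

Import Order.TTheory GRing.Theory Num.Theory.
Local Open Scope ring_scope.

Lemma ord_pos_N (N : nat) (x : 'I_N) : (0 < N)%N.
Proof. exact: leq_ltn_trans (leq0n x) (ltn_ord x). Qed.

Definition ord_shift (N : nat) (x : 'I_N) (m : nat) : 'I_N :=
  Ordinal (ltn_pmod (x + m) (ord_pos_N x)).

Definition is_CFR (M N : nat) (pi : 'I_M -> {perm 'I_N}) : Prop :=
  forall m : 'I_N, (m : nat) != 0%N ->
  forall (i j : 'I_M) (x y : 'I_N),
    (pi i x, pi i (ord_shift x m)) = (pi j y, pi j (ord_shift y m))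
    <-> (i = j /\ x = y).

Definition CFR_exists (M N : nat) : Prop :=
  exists pi : 'I_M -> {perm 'I_N}, is_CFR pi.

Definition is_Ftilde (N K : nat) : Prop :=
  CFR_exists K N /\ forall M : nat, CFR_exists M N -> (M <= K)%N.

Section Seqs.
Variable R : realType.
Local Open Scope complex_scope.

Definition omega (n : nat) : R[i] :=
  (cos (2 * pi / n%:R) +i* sin (2 * pi / n%:R))%C.

Definition pcorr (L : nat) (c d : nat -> R[i]) (tau : nat) : R[i] :=
  \sum_(t < L) c t * (d ((t + tau) %% L)%N)^*.

Definition cmag (z : R[i]) : R := complex.Re `|z|.

(* the value pi(<k>_N) as a natural number (k mod N is always < N when N > 0) *)
Definition perm_at_mod (N : nat) (p : {perm 'I_N}) (k : nat) : nat :=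
  if @insub nat (fun x => (x < N)%N) 'I_N (k %% N)%N is Some x then nat_of_ord (p x) else 0%N.

Definition cfr_seq (K N : nat) (pi : 'I_K -> {perm 'I_N}) (m : 'I_K) (i : nat) : R[i] :=
  omega N.+1 ^+ (perm_at_mod (pi m) i * i)%N.

Definition theta_max (K N : nat) (pi : 'I_K -> {perm 'I_N}) : R :=
  let L := (N * N.+1)%N in
  \big[Num.max/0]_(a < K) \big[Num.max/0]_(b < K)
    \big[Num.max/0]_(tau < L | (a != b) || ((tau : nat) != 0%N))
      cmag (pcorr L (cfr_seq pi a) (cfr_seq pi b) tau).

Definition theta_opti (K L n : nat) : R :=
  L%:R * Num.sqrt (((K%:R - 1) * L%:R + n%:R) / ((L%:R - n%:R) * (K%:R * L%:R - 1))).
End Seqs.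

Definition admissible (H : seq nat) : Prop :=
  forall q : nat, prime q -> exists r : nat, (r < q)%N /\ forall k, k \in H -> (k %% q)%N != r.

Definition odd_prime (p : nat) : bool := prime p && odd p.

Definition family1 (N : nat) : Prop := odd_prime N.

Definition family2 (k N : nat) : Prop :=
  exists p : nat, [/\ odd_prime p, odd_prime (p + k) & N = (p * (p + k))%N].

Definition family3 (H : seq nat) (N : nat) : Prop :=
  exists m : nat, (forall k, k \in H -> odd_prime (m + k)) /\ N = (\prod_(k <- H) (m + k))%N.

Definition ratio_tends_to_1 (R : realType) (S : nat -> Prop) : Prop :=
  forall eps : R, 0 < eps -> exists N0 : nat, forall N : nat, (N0 <= N)%N -> S N ->
    forall (K : nat) (pi : 'I_K -> {perm 'I_N}), is_Ftilde N K -> is_CFR pi ->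
      `| theta_max R pi / theta_opti R K (N * N.+1) N - 1 | < eps.

(* Put z = omega_(N+1) and write the correlation index as t = sN + u
   with u < N and s <= N.  The s-sum of a correlation term is a geometric sum of
   (N+1)-th roots of unity, so only the "coincidences" u with
   pi_a(u) = pi_b(u + tau) survive, each contributing N+1 times a root of unity.
   The Florentine property allows at most one coincidence unless a = b and
   N | tau; in that remaining case every u coincides and the sum is a full sum of
   powers of a nontrivial root of unity minus one term.  Hence theta_max = N + 1
   exactly, and theta_max / theta_opti - 1 is at most 1/(K-1).  Finally, if p is
   the least prime factor of N, the rows x |-> (a+1)x (0 <= a < p-1) form a
   circular Florentine rectangle, so K >= p - 1, and p grows along each of the
   three families. *)

From HB Require Import structures.
From mathcomp Require Import all_boot all_order all_algebra all_fingroup.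
From mathcomp Require Import reals trigo complex.
From mathcomp Require Import ring lra zify.
Import Order.TTheory GRing.Theory Num.Theory.
Set Implicit Arguments.
Unset Strict Implicit.
Unset Printing Implicit Defensive.

Lemma coprime_lt_pdiv d N : 0 < d < pdiv N -> coprime d N.
Proof.
case/andP=> d_gt0; apply: contraTT; rewrite -leqNgt => ncop.
have gt1 : 1 < gcdn d N by rewrite ltn_neqAle eq_sym ncop gcdn_gt0 d_gt0.
exact: leq_trans (pdiv_min_dvd gt1 (dvdn_gcdr d N)) (dvdn_leq d_gt0 (dvdn_gcdl d N)).
Qed.

Lemma eqn_modMl_coprime q x y N :
  coprime q N -> (q * x == q * y %[mod N]) = (x == y %[mod N]).
Proof.
move=> cqN; wlog le_yx : x y / y <= x.
  by move=> W; case: (leqP y x) => [/W//|/ltnW/W]; rewrite eq_sym => ->; rewrite eq_sym.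
by rewrite !eqn_mod_dvd ?leq_mul2l ?le_yx ?orbT // -mulnBr Gauss_dvdr // coprime_sym.
Qed.

Lemma eqn_modMr_lt_pdiv a b m N : a < pdiv N -> b < pdiv N -> 0 < m < N ->
  (a * m == b * m %[mod N]) = (a == b).
Proof.
wlog le_ab : a b / a <= b.
  move=> W ha hb hm; case: (leqP a b) => [le|/ltnW le]; first exact: W.
  by rewrite eq_sym [a == b]eq_sym W.
move=> _ hb /andP[m_gt0 ltmN]; rewrite eq_sym eqn_mod_dvd ?leq_mul2r ?le_ab ?orbT //.
have [<-|neq_ab] := eqVneq a b; first by rewrite subnn dvdn0.
rewrite -mulnBl Gauss_dvdr ?gtnNdvd // coprime_sym coprime_lt_pdiv //; lia.
Qed.

Definition mul_ord N (q : nat) (x : 'I_N) : 'I_N :=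
  Ordinal (ltn_pmod (q * x) (ord_pos_N x)).

Lemma mul_ord_inj N q : coprime q N -> injective (@mul_ord N q).
Proof.
move=> cqN x y /(congr1 val)/eqP /=; rewrite eqn_modMl_coprime // !modn_small //.
by move/eqP/ord_inj.
Qed.

Section MultiplierRectangle.
Variable N : nat.

Lemma coprime_ord_pdiv (a : 'I_(pdiv N).-1) : coprime a.+1 N.
Proof. by apply: coprime_lt_pdiv; have := ltn_ord a; have := pdiv_gt0 N; lia. Qed.

Definition mul_perm (a : 'I_(pdiv N).-1) : {perm 'I_N} :=
  perm (mul_ord_inj (coprime_ord_pdiv a)).

Lemma mul_perm_CFR : is_CFR mul_perm.
Proof.
move=> m m_neq0 a b x y; split=> [|[-> ->] //]; rewrite !permE.
case=> exy /eqP; rewrite !modnMmr !mulnDr.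
rewrite -modnDml -[in X in _ == X]modnDml exy eqn_modDl.
have lt_pdiv (c : 'I_(pdiv N).-1) : c.+1 < pdiv N by have := ltn_ord c; lia.
rewrite eqn_modMr_lt_pdiv ?lt_pdiv ?lt0n ?m_neq0 //= => /eqP/succn_inj/ord_inj eq_ab.
by split=> //; apply: (mul_ord_inj (coprime_ord_pdiv a)); apply: val_inj; rewrite /= exy eq_ab.
Qed.

End MultiplierRectangle.

Lemma Ftilde_ge_pdiv N K : is_Ftilde N K -> (pdiv N).-1 <= K.
Proof. by case=> _; apply; exists (@mul_perm N); apply: mul_perm_CFR. Qed.

Lemma pdiv_prod_primes_ge (I : eqType) (r : seq I) (f : I -> nat) c :
  (forall i, i \in r -> prime (f i) && (c <= f i)) -> 1 < \prod_(i <- r) f i ->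
  c <= pdiv (\prod_(i <- r) f i).
Proof.
move=> primes_f gt1; have := pdiv_dvd (\prod_(i <- r) f i).
rewrite Euclid_dvd_prod ?pdiv_prime // big_has => /hasP[i ir].
have /andP[fi_prime le_c] := primes_f i ir.
by rewrite dvdn_prime2 ?pdiv_prime // => /eqP->.
Qed.

Local Open Scope ring_scope.

Lemma sum_prim_root_expr (F : idomainType) n (z : F) k : n.-primitive_root z ->
  \sum_(s < n) z ^+ (k * s) = if (n %| k)%N then n%:R else 0.
Proof.
move=> prim_z; under eq_bigr do rewrite exprM.
rewrite (prim_order_dvd prim_z); have [->|neq1] := eqVneq (z ^+ k) 1; last first.
  have := prim_order_gt0 prim_z; case: n prim_z => // n prim_z _.
  have := expfS_eq1 (z ^+ k) n; rewrite -exprM mulnC exprM (prim_expr_order prim_z) expr1n eqxx.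
  by rewrite (negbTE neq1) => /esym/eqP.
by rewrite (eq_bigr (fun=> 1)) => [|s _]; rewrite ?expr1n // sumr_const card_ord.
Qed.

Lemma cos_lt1 (R : realType) (x : R) : 0 < x < pi *+ 2 -> cos x < 1.
Proof.
rewrite mulr2n => /andP[x_gt0 x_lt].
have half_bd : 0 < x / 2 < pi by apply/andP; split; lra.
have xE : x = (x / 2) *+ 2 by rewrite mulr2n; lra.
have := sin_gt0_pi half_bd; rewrite [in cos x]xE cos_mulr2n cos2sin2; nra.
Qed.

Section Omega.
Variable R : realType.

Lemma omegaX n k : omega R n ^+ k =
  (cos (k%:R * (2 * pi / n%:R)) +i* sin (k%:R * (2 * pi / n%:R)))%C.
Proof.
elim: k => [|k IH]; first by rewrite expr0 mul0r cos0 sin0.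
rewrite exprS IH; set a := 2 * pi / n%:R.
have -> : k.+1%:R * a = k%:R * a + a :> R by rewrite -natr1 mulrDl mul1r.
rewrite cosD sinD /omega -/a /=; congr (_ +i* _)%C; ring.
Qed.

Lemma omega_prim n : (0 < n)%N -> n.-primitive_root (omega R n).
Proof.
move=> n_gt0; have angle k : k%:R * (2 * pi / n%:R) = pi *+ 2 * (k%:R / n%:R) :> R.
  by rewrite mulrCA mulrA mulr2n; ring.
have omega_n : omega R n ^+ n = 1.
  by rewrite omegaX angle divff ?pnatr_eq0 -?lt0n // mulr1 cos2pi sin2pi.
have [m prim_m m_dvd] := prim_order_exists n_gt0 omega_n.
have m_gt0 := prim_order_gt0 prim_m.
suff /eqP eq_mn : m == n by move: prim_m; rewrite eq_mn.
rewrite eqn_leq (dvdn_leq n_gt0 m_dvd) leqNgt; apply/negP => lt_mn.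
have := prim_expr_order prim_m; rewrite omegaX => -[cos_m _].
suff : cos (m%:R * (2 * pi / n%:R)) < 1 :> R by rewrite cos_m ltxx.
apply: cos_lt1; rewrite angle; apply/andP; split.
  by rewrite mulr_gt0 ?divr_gt0 ?ltr0n // pmulrn_lgt0 ?pi_gt0.
rewrite gtr_pMr; last by rewrite pmulrn_lgt0 // pi_gt0.
by rewrite ltr_pdivrMr ?ltr0n // mul1r ltr_nat.
Qed.

Variable n : nat.
Hypothesis n_gt0 : (0 < n)%N.
Let prim_omega := omega_prim n_gt0.

Lemma norm_omegaX k : `|omega R n ^+ k| = 1.
Proof.
rewrite normrX; suff /eqP-> : `|omega R n| == 1 by rewrite expr1n.
by rewrite -(pexpr_eq1 n_gt0) // -normrX (prim_expr_order prim_omega) normr1.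
Qed.

Lemma conj_omegaX k : (omega R n ^+ k)^* = omega R n ^+ (n.-1 * k).
Proof.
rewrite rmorphXn exprM; congr (_ ^+ k).
have omega_neq0 : omega R n != 0 by rewrite -normr_eq0 -(expr1 (omega R n)) norm_omegaX oner_eq0.
apply: (mulfI omega_neq0); rewrite -exprS prednK // (prim_expr_order prim_omega).
by rewrite -normCK -(expr1 (omega R n)) norm_omegaX expr1n.
Qed.

End Omega.

Lemma cmag_le_natr (R : realType) (x : R[i]) n : `|x| <= n%:R -> cmag x <= n%:R.
Proof. by rewrite -(rmorph_nat (@real_complex R)) lecE => /andP[]. Qed.

Lemma cmag_natr (R : realType) (x : R[i]) n : `|x| = n%:R -> cmag x = n%:R.
Proof. by rewrite /cmag => ->; rewrite -(rmorph_nat (@real_complex R)). Qed.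

Lemma sum_ord_mul (V : nmodType) m n (F : nat -> V) :
  \sum_(t < m * n) F t = \sum_(s < n) \sum_(u < m) F (s * m + u)%N.
Proof.
elim: n => [|n IH]; first by rewrite muln0 !big_ord0.
rewrite big_ord_recr /= -IH mulnSr big_split_ord /=.
by congr (_ + _); apply: eq_bigr => u _; rewrite mulnC.
Qed.

Lemma dvdSn_addMn N A B : (A <= N)%N -> (B <= N)%N ->
  (N.+1 %| A + N * B)%N = (A == B).
Proof.
move=> le_AN le_BN; rewrite /dvdn -[X in _ == X](mod0n N.+1) -(eqn_modDr B) add0n.
have -> : (A + N * B + B = B * N.+1 + A)%N by rewrite mulnS; lia.
by rewrite modnMDl !modn_small.
Qed.

Lemma perm_at_modE N (p : {perm 'I_N}) (x : 'I_N) k :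
  k = x %[mod N] -> perm_at_mod p k = p x.
Proof.
rewrite /perm_at_mod (modn_small (ltn_ord x)) => kx.
case: insubP => [y _ yE|]; first by congr (nat_of_ord (p _)); apply: val_inj; rewrite yE.
by rewrite kx ltn_ord.
Qed.

Section Correlation.
Variables (R : realType) (N K : nat) (rows : 'I_K -> {perm 'I_N}).
Local Notation z := (omega R N.+1).
Local Notation L := (N * N.+1)%N.
Local Notation corr a b := (pcorr L (cfr_seq R rows a) (cfr_seq R rows b)).
Let prim_z := omega_prim R (ltn0Sn N).

Definition coincidences (a b : 'I_K) (tau : nat) : {pred 'I_N} :=
  [pred u | rows a u == rows b (ord_shift u tau)].

Lemma pcorr_cfr_seq a b tau :
  corr a b tau = N.+1%:R * \sum_(u in coincidences a b tau) z ^+ (N * tau * rows a u).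
Proof.
pose F t := cfr_seq R rows a t * (cfr_seq R rows b ((t + tau) %% L))^*.
rewrite /pcorr (sum_ord_mul N N.+1 F) exchange_big mulr_sumr [RHS]big_mkcond; apply: eq_bigr => u _.
set A := nat_of_ord (rows a u); set B := nat_of_ord (rows b (ord_shift u tau)).
have term s : F (s * N + u)%N =
    z ^+ (N * tau * B + (A + N * B) * u) * z ^+ ((A + N * B) * N * s).
  rewrite /F /cfr_seq (perm_at_modE _ (x := u)) ?modnMDl //.
  rewrite (perm_at_modE _ (x := ord_shift u tau)) -/A -/B; last first.
    by rewrite modn_dvdm ?dvdn_mulr // -addnA modnMDl /= modn_mod.
  have /eqP-> : z ^+ (B * ((s * N + u + tau) %% L)) == z ^+ (B * (s * N + u + tau)).
    by rewrite (eq_prim_root_expr prim_z) -modnMmr modn_dvdm ?dvdn_mull ?modnMmr.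
  rewrite (conj_omegaX _ (ltn0Sn N)) -!exprD /=; congr (_ ^+ _); ring.
under eq_bigr do rewrite term.
rewrite -mulr_sumr sum_prim_root_expr // Gauss_dvdl ?coprimeSn //.
rewrite dvdSn_addMn ?(ltnW (ltn_ord _)) //.
have -> : (u \in coincidences a b tau) = (A == B) by [].
have [<-|_] := eqVneq A B; last by rewrite !mulr0.
rewrite mulrC; congr (_ * _); apply/eqP; rewrite (eq_prim_root_expr prim_z) -modnDmr.
by rewrite (_ : (A + N * A) * u = A * u * N.+1)%N ?modnMl ?addn0 //; ring.
Qed.

Lemma norm_pcorr_cfr_le a b tau :
  `|corr a b tau| <= N.+1%:R * #|coincidences a b tau|%:R.
Proof.
rewrite pcorr_cfr_seq normrM normr_nat ler_wpM2l //.
apply: le_trans (ler_norm_sum _ _ _) _.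
by rewrite (eq_bigr (fun=> 1)) => [|u _]; rewrite ?(norm_omegaX _ (ltn0Sn N)) // sumr_const.
Qed.

Lemma card_coincidences_le1 a b tau : is_CFR rows ->
  (a != b) || (tau %% N != 0)%N -> (#|coincidences a b tau| <= 1)%N.
Proof.
move=> cfr ab_tau; apply/card_le1_eqP => u1 u2.
(* Coincidences u1 < u2 repeat an ordered pair at distance u2 - u1 in rows a and b. *)
wlog lt12 : u1 u2 / (u1 < u2)%N.
  move=> W; case: (ltngtP u1 u2) => [/W//|/W W21 h1 h2|/val_inj-> //].
  by rewrite W21.
rewrite !inE => /eqP h1 /eqP h2; exfalso.
have ltN : (u2 - u1 < N)%N by have := ltn_ord u2; lia.
pose m := Ordinal ltN.
have m_neq0 : m != 0%N :> nat by rewrite /= subn_eq0 -ltnNge.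
have shift_u1 : ord_shift u1 m = u2.
  by apply: val_inj; rewrite /= subnKC ?(ltnW lt12) // modn_small.
have shift_tau : ord_shift (ord_shift u1 tau) m = ord_shift u2 tau.
  by apply: val_inj; rewrite /= modnDml; congr (_ %% _)%N; lia.
have /(cfr m m_neq0 a b u1 (ord_shift u1 tau)) [eq_ab /(congr1 val) /= u1E] :
    (rows a u1, rows a (ord_shift u1 m)) =
    (rows b (ord_shift u1 tau), rows b (ord_shift (ord_shift u1 tau) m)).
  by rewrite shift_u1 shift_tau h1 h2.
move: ab_tau; rewrite eq_ab eqxx /= => /eqP; apply; apply/eqP.
have /eqP : (u1 + tau = u1 + 0 %[mod N])%N by rewrite addn0 -u1E modn_small.
by rewrite eqn_modDl mod0n.
Qed.

Lemma norm_pcorr_cfr_auto a j : (0 < j <= N)%N -> `|corr a a (j * N)| = N.+1%:R.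
Proof.
move=> /andP[j_gt0 le_jN]; set k := (N * (j * N))%N.
have shift_jN (u : 'I_N) : ord_shift u (j * N) = u.
  by apply: val_inj; rewrite /= addnC modnMDl modn_small.
have sum_perm : \sum_(u < N) z ^+ (k * rows a u) = \sum_(w < N) z ^+ (k * w).
  by rewrite [RHS](reindex_inj (@perm_inj _ (rows a))).
have ndvd : ~~ (N.+1 %| k)%N.
  by rewrite Gauss_dvdr ?coprimeSn // Gauss_dvdl ?coprimeSn // gtnNdvd // ltnS.
have := sum_prim_root_expr k prim_z; rewrite (negbTE ndvd) big_ord_recr /= => /eqP.
rewrite addr_eq0 => /eqP sumE.
rewrite pcorr_cfr_seq (eq_bigl predT) ?sum_perm ?sumE => [|u]; last by rewrite inE /= shift_jN eqxx.
by rewrite normrM normrN (norm_omegaX _ (ltn0Sn N)) normr_nat mulr1.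
Qed.

Lemma cmag_pcorr_cfr_le a b tau : is_CFR rows -> (tau < L)%N ->
  (a != b) || (tau != 0)%N -> cmag (corr a b tau) <= N.+1%:R.
Proof.
move=> cfr lt_tauL ab_tau; have [|] := boolP ((a != b) || (tau %% N != 0)%N).
  move=> /(card_coincidences_le1 cfr) le1; apply: cmag_le_natr.
  apply: le_trans (norm_pcorr_cfr_le a b tau) _.
  by rewrite -[leRHS]mulr1 ler_wpM2l // lern1.
case/norP=> /negPn/eqP eq_ab /negPn dvd_tau.
move: ab_tau; rewrite eq_ab eqxx /= => tau_neq0.
have N_gt0 : (0 < N)%N by case: (posnP N) lt_tauL => [->|//]; rewrite mul0n.
have j_bd : (0 < tau %/ N <= N)%N.
  rewrite divn_gt0 // dvdn_leq ?lt0n //=.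
  by rewrite -ltnS ltn_divLR // mulnC.
by rewrite -(divnK dvd_tau) (cmag_natr (norm_pcorr_cfr_auto _ j_bd)).
Qed.

Lemma theta_max_cfr : (0 < N)%N -> (0 < K)%N -> is_CFR rows ->
  theta_max R rows = N.+1%:R.
Proof.
move=> N_gt0 K_gt0 cfr; apply/eqP; rewrite eq_le; apply/andP; split.
  do 3![apply: bigmax_le => [|? ?]; first exact: ler0n].
  exact: cmag_pcorr_cfr_le.
pose a0 := Ordinal K_gt0.
have ltNL : (N < L)%N by rewrite mulnS; lia.
apply: le_trans (le_bigmax _ _ a0); apply: le_trans (le_bigmax _ _ a0).
apply: le_trans (le_bigmax_cond _ _ (j := Ordinal ltNL) _); last by apply/orP; right; rewrite -lt0n.
by rewrite /= -[N in corr _ _ N]mul1n (cmag_natr (norm_pcorr_cfr_auto a0 _)) ?N_gt0.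
Qed.

End Correlation.

Lemma theta_opti_ratio (R : realType) N K : (0 < N)%N -> (1 < K)%N ->
  `|N.+1%:R / theta_opti R K (N * N.+1) N - 1| <= (K%:R - 1)^-1.
Proof.
move=> N_gt0 K_gt1; rewrite /theta_opti natrM -natr1.
have : 1 <= N%:R :> R by rewrite ler1n.
have : 2 <= K%:R :> R by rewrite ler_nat.
move: (N%:R : R) (K%:R : R) => n k k_ge2 n_ge1.
move LE : (n * (n + 1)) => L.
have L_ge2 : 2 <= L by rewrite -LE; nra.
have den_gt0 : 0 < (k - 1) * L + n by nra.
have kL_gt1 : 0 < k * L - 1 by nra.
have -> : L - n = n ^+ 2 by rewrite -LE; ring.
set X := ((k - 1) * L + n) / _; have X_gt0 : 0 < X.
  by apply: divr_gt0 => //; apply: mulr_gt0 => //; apply: exprn_gt0; lra.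
set r := (n + 1) / (L * Num.sqrt X).
have r_ge0 : 0 <= r by rewrite /r divr_ge0 ?mulr_ge0 ?sqrtr_ge0; lra.
have r2E : r ^+ 2 = (k * L - 1) / ((k - 1) * L + n).
  rewrite /r expr_div_n exprMn sqr_sqrtr ?ltW // /X.
  rewrite -LE; field; rewrite LE.
  by apply/and4P; split; apply: lt0r_neq0 => //; lra.
have r2_ge1 : 1 <= r ^+ 2 by rewrite r2E ler_pdivlMr // mul1r; nra.
set i := (k - 1)^-1; have i_gt0 : 0 < i by rewrite invr_gt0; lra.
have k1i : (k - 1) * i = 1 by rewrite mulfV //; apply: lt0r_neq0; lra.
have r2_le : r ^+ 2 <= 1 + i by rewrite r2E ler_pdivrMr //; nra.
have r_ge1 : 1 <= r by nra.
by rewrite ger0_norm; nra.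
Qed.

Lemma ratio_tends_to_1_pdiv (R : realType) (S : nat -> Prop) :
  (forall C, exists N0, forall N, (N0 <= N)%N -> S N -> (C < pdiv N)%N) ->
  ratio_tends_to_1 R S.
Proof.
move=> large_pdiv eps eps_gt0; set C := Num.bound eps^-1.
have [N0 large_N] := large_pdiv C.+2.
exists N0 => N le_N0N SN K rows FK cfr.
have lt_pdiv := large_N N le_N0N SN.
have N_gt0 : (0 < N)%N by case: (posnP N) lt_pdiv => [->|].
have le_K := Ftilde_ge_pdiv FK.
rewrite theta_max_cfr //; last by lia.
apply: le_lt_trans (theta_opti_ratio _ N_gt0 _) _; first by lia.
have lt_C : eps^-1 < C%:R by apply: archi_boundP; rewrite invr_ge0 ltW.
have le_CK : C%:R <= K%:R - 1 :> R by rewrite lerBrDr natr1 ler_nat; lia.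
rewrite invf_plt ?posrE //; first by lra.
by rewrite subr_gt0 ltr1n; lia.
Qed.

Theorem corollary1 (R : realType) :
  [/\ ratio_tends_to_1 R (fun N => [&& odd N, (3 <= N)%N & odd_prime N]),
      (forall k : nat, (0 < k)%N ->
         ratio_tends_to_1 R (fun N => [/\ odd N, (3 <= N)%N & family2 k N])) &
      (forall H : seq nat, uniq H -> admissible H ->
         ratio_tends_to_1 R (fun N => [/\ odd N, (3 <= N)%N & family3 H N]))].
Proof.
(* Oddness, k > 0 and admissibility only make the families infinite. *)
split.
- apply: ratio_tends_to_1_pdiv => C; exists C.+1 => N le_CN /and3P[_ _ /andP[N_prime _]].
  by rewrite pdiv_id.
- move=> k _; apply: ratio_tends_to_1_pdiv => C; exists (C * (C + k)).+1.
  move=> N le_N [_ N_ge3 [p [/andP[p_prime _] /andP[pk_prime _] NE]]].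
  have lt_Cp : (C < p)%N.
    by rewrite ltnNge; apply: contraTN le_N => le_pC; rewrite -leqNgt NE leq_mul ?leq_add2r.
  have prodE : (p * (p + k) = \prod_(q <- [:: p; p + k]) q)%N by rewrite big_cons big_seq1.
  rewrite NE prodE in N_ge3 *.
  apply: leq_trans lt_Cp (pdiv_prod_primes_ge _ _) => [q|]; last exact: leq_trans _ N_ge3.
  by rewrite !inE => /orP[]/eqP->; rewrite ?p_prime ?pk_prime ?leqnn ?leq_addr.
- move=> H _ _; apply: ratio_tends_to_1_pdiv => C; exists (\prod_(k <- H) (C + k)).+1.
  move=> N le_N [_ N_ge3 [m [primes_H NE]]].
  have lt_Cm : (C < m)%N.
    rewrite ltnNge; apply: contraTN le_N => le_mC; rewrite -leqNgt NE.
    by apply: leq_prod => k _; rewrite leq_add2r.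
  rewrite NE in N_ge3 *; apply: leq_trans lt_Cm (pdiv_prod_primes_ge _ _) => [k kH|].
    by have /andP[-> _] := primes_H k kH; rewrite leq_addr.
  exact: leq_trans _ N_ge3.
Qed.
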